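(* Let $\Gamma$ be a nontrivial standard graph, let $f$ be a Morse eigenfunction of $\Gamma$ with eigenvalue $k$ (i.e. $-f''=k^2f$ on every edge, with Neumann vertex conditions), and let $\Omega$ be a Neumann domain of $f$, regarded as a metric graph with Neumann vertex conditions at all of its vertices. Then $f|_\Omega$ is an eigenfunction of the standard graph $\Omega$ corresponding to the eigenvalue $k$.
   Context: A metric graph is a finite connected graph $\Gamma=(\mathcal{V},\mathcal{E})$ (loops allowed) in which each edge $e$ is identified with an interval $[0,L_e]$, $L_e>0$. The Laplacian acts as $f|_e\mapsto -\frac{d^2}{dx_e^2}f|_e$ on functions in $\bigoplus_e H^2([0,L_e])$ satisfying Neumann vertex conditions at every vertex $v$: $f$ is continuous at $v$ and the sum of outgoing derivatives of $f$ at $v$ over incident edges is zero. Such a graph is standard; it is assumed to have no vertices of degree two, and it is nontrivial if it is not a single loop. The eigenvalues are written as $k^2$ with $k\ge0$, and $k$ is also called the eigenvalue. An eigenfunction $f$ is Morse if on each edge no interior point has both $f'$ and $f''$ vanishing. For a Morse eigenfunction, a Neumann point is a point of $\Gamma$ which is a local extremum (maximum or minimum) of $f$ and is not a vertex of degree one. A Neumann domain of $f$ is the closure of a connected component of $\Gamma$ minus the set of Neumann points, the closure being done by adding a vertex of degree one at each open endpoint of the component; its vertices are the vertices of $\Gamma$ it contains together with these added endpoints. *)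

From HB Require Import structures.
From mathcomp Require Import all_boot all_order all_algebra.
From mathcomp Require Import all_classical all_reals all_analysis.
From Stdlib Require Import Relations.

Set Implicit Arguments.
Unset Strict Implicit.
Unset Printing Implicit Defensive.

Import Order.TTheory GRing.Theory Num.Theory.
Local Open Scope ring_scope.

(* A metric graph: finite vertex set, finite edge set (loops and multiple
   edges allowed), each edge e identified with [0, mlen e], oriented from
   msrc e (x = 0) to mtgt e (x = mlen e). *)
Record mgraph (R : realType) := MGraph {
  mV : finType;
  mE : finType;
  msrc : mE -> mV;
  mtgt : mE -> mV;
  mlen : mE -> R;
  mlen_pos : forall e, 0 < mlen e }.

Arguments msrc {R G} e : rename.
Arguments mtgt {R G} e : rename.
Arguments mlen {R G} e : rename.

(* degree of a vertex (a loop counts twice) *)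
Definition deg (R : realType) (G : mgraph R) (v : mV G) : nat :=
  #|[pred e | msrc e == v]| + #|[pred e | mtgt e == v]|.

Definition adj (R : realType) (G : mgraph R) (v w : mV G) : Prop :=
  exists e, msrc e = v /\ mtgt e = w.

Definition graph_connected (R : realType) (G : mgraph R) : Prop :=
  forall v w : mV G, clos_refl_sym_trans _ (@adj R G) v w.

Definition standard (R : realType) (G : mgraph R) : Prop :=
  forall v : mV G, deg v <> 2%N.

Definition nontrivial (R : realType) (G : mgraph R) : Prop :=
  ~ (#|mV G| = 1%N /\ #|mE G| = 1%N /\ exists e : mE G, msrc e = mtgt e).

(* A function on the graph: on each edge e, a real function whose restriction
   to [0, mlen e] is the value of the function on e. *)
Definition gfun (R : realType) (G : mgraph R) := mE G -> R -> R.

(* -f'' = k^2 f on every edge (the edge function is a C^2 solution of the ODE;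
   every H^2 solution on [0,L] extends uniquely to such a solution on R). *)
Definition edge_ode (R : realType) (G : mgraph R) (k : R) (f : gfun G) : Prop :=
  forall (e : mE G) (x : R),
    derivable (f e) x 1 /\ derivable (derive1 (f e)) x 1 /\
    derive1 (derive1 (f e)) x = - (k ^+ 2) * f e x.

Definition neumann_conditions (R : realType) (G : mgraph R) (f : gfun G) : Prop :=
  forall v : mV G,
    (forall e1 e2 : mE G,
        (msrc e1 = v -> msrc e2 = v -> f e1 0 = f e2 0) /\
        (msrc e1 = v -> mtgt e2 = v -> f e1 0 = f e2 (mlen e2)) /\
        (mtgt e1 = v -> mtgt e2 = v -> f e1 (mlen e1) = f e2 (mlen e2))) /\
    \sum_(e | msrc e == v) derive1 (f e) 0
      - \sum_(e | mtgt e == v) derive1 (f e) (mlen e) = 0.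

Definition nonzero_fun (R : realType) (G : mgraph R) (f : gfun G) : Prop :=
  exists (e : mE G) (x : R), 0 <= x <= mlen e /\ f e x != 0.

Definition eigenfunction (R : realType) (G : mgraph R) (k : R) (f : gfun G) : Prop :=
  [/\ edge_ode k f, neumann_conditions f & nonzero_fun f].

Definition morse (R : realType) (G : mgraph R) (f : gfun G) : Prop :=
  forall (e : mE G) (x : R), 0 < x < mlen e ->
    ~ (derive1 (f e) x = 0 /\ derive1 (derive1 (f e)) x = 0).

(* Points of a metric graph: vertices, and interior points of edges. *)
Inductive gpoint (R : realType) (G : mgraph R) : Type :=
  | PV of mV G
  | PE of mE G & R.

Arguments PV {R G} v.
Arguments PE {R G} e x.

Definition valid_point (R : realType) (G : mgraph R) (p : gpoint G) : Prop :=
  match p with PV _ => True | PE e x => 0 < x < mlen e end.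

Definition canon (R : realType) (G : mgraph R) (e : mE G) (x : R) : gpoint G :=
  if x == 0 then PV (msrc e) else if x == mlen e then PV (mtgt e) else PE e x.

Definition local_ext (R : realType) (G : mgraph R) (f : gfun G)
    (cmp : R -> R -> bool) (p : gpoint G) : Prop :=
  match p with
  | PE e x => exists2 eps : R, 0 < eps &
      forall y, 0 <= y <= mlen e -> `|y - x| < eps -> cmp (f e y) (f e x)
  | PV v => exists2 eps : R, 0 < eps &
      forall e : mE G,
        (msrc e = v -> forall y, 0 <= y <= mlen e -> y < eps -> cmp (f e y) (f e 0)) /\
        (mtgt e = v -> forall y, 0 <= y <= mlen e -> mlen e - y < eps ->
                         cmp (f e y) (f e (mlen e)))
  end.

Definition neumann_point (R : realType) (G : mgraph R) (f : gfun G) (p : gpoint G) : Prop :=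
  valid_point p /\
  (local_ext f (fun a b => a <= b) p \/ local_ext f (fun a b => b <= a) p) /\
  ~ (exists v, p = PV v /\ deg v = 1%N).

(* elementary connections inside G minus the Neumann points *)
Inductive nstep (R : realType) (G : mgraph R) (f : gfun G) : gpoint G -> gpoint G -> Prop :=
  | nstep_edge e x y :
      0 < x < mlen e -> 0 < y < mlen e ->
      (forall z, Num.min x y <= z <= Num.max x y -> ~ neumann_point f (PE e z)) ->
      nstep f (PE e x) (PE e y)
  | nstep_src e y :
      0 < y < mlen e -> ~ neumann_point f (PV (msrc e)) ->
      (forall z, 0 < z <= y -> ~ neumann_point f (PE e z)) ->
      nstep f (PV (msrc e)) (PE e y)
  | nstep_tgt e y :
      0 < y < mlen e -> ~ neumann_point f (PV (mtgt e)) ->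
      (forall z, y <= z < mlen e -> ~ neumann_point f (PE e z)) ->
      nstep f (PV (mtgt e)) (PE e y).

Definition nconn (R : realType) (G : mgraph R) (f : gfun G) : gpoint G -> gpoint G -> Prop :=
  clos_refl_sym_trans _ (@nstep R G f).

Definition iota_pt (R : realType) (G O : mgraph R) (iE : mE O -> mE G)
    (off : mE O -> R) (iV : mV O -> gpoint G) (p : gpoint O) : gpoint G :=
  match p with
  | PV w => iV w
  | PE e' x => canon (iE e') (off e' + x)
  end.

(* (O, iE, off, iV) is (a realization of) a Neumann domain of f on G:
   each edge e' of O is the segment [off e', off e' + mlen e'] of the edge
   iE e' of G; each vertex of O is either a vertex of G that is not a Neumann
   point, or an added endpoint of degree one sitting at a Neumann point; the
   map from O minus the added endpoints to G is injective and its image is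
   exactly one connected component of G minus the Neumann points. *)
Definition neumann_domain (R : realType) (G : mgraph R) (f : gfun G)
    (O : mgraph R) (iE : mE O -> mE G) (off : mE O -> R) (iV : mV O -> gpoint G) : Prop :=
  let iP := iota_pt iE off iV in
  [/\ (forall e', 0 <= off e' /\ off e' + mlen e' <= mlen (iE e')),
      (forall e', iV (msrc e') = canon (iE e') (off e') /\
                  iV (mtgt e') = canon (iE e') (off e' + mlen e')),
      (forall w : mV O, (exists v, iV w = PV v /\ ~ neumann_point f (PV v)) \/
                        (neumann_point f (iV w) /\ deg w = 1%N)),
      (forall p q : gpoint O, valid_point p -> valid_point q ->
          ~ neumann_point f (iP p) -> ~ neumann_point f (iP q) ->
          iP p = iP q -> p = q)
    & exists2 c : gpoint G, valid_point c /\ ~ neumann_point f c &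
        forall q : gpoint G,
          (valid_point q /\ ~ neumann_point f q /\ nconn f c q) <->
          (exists p : gpoint O, [/\ valid_point p, ~ neumann_point f (iP p) & iP p = q])].

From Pilot Require Import Defs.
From HB Require Import structures.
From mathcomp Require Import all_boot all_order all_algebra.
From mathcomp Require Import all_classical all_reals all_analysis.
From mathcomp Require Import ring lra.
From Stdlib Require Import Relations.
(* mathcomp-analysis also exports a [canon]; bring [Defs.canon] back in scope. *)
Import Defs.
Import Order.TTheory GRing.Theory Num.Theory.
Set Implicit Arguments.
Unset Strict Implicit.
Local Open Scope ring_scope.

(* On each edge of the domain f solves the same equation -f'' = k^2 f, and
   continuity at the vertices is inherited from the graph, so only Kirchhoff's
   condition needs an argument.  At an endpoint added at a Neumann point, f has a
   local extremum: in the interior of an edge f' vanishes there (Fermat), and at a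
   vertex every outgoing derivative has the sign of the extremum, so Kirchhoff's
   condition in the graph forces all of them to vanish.  At a vertex v of the graph
   that is not a Neumann point, the domain contains a germ of every edge at v:
   the energy f'^2 + k^2 f^2 is constant along an edge, so by the Morse property
   the critical points of f are isolated and no Neumann point accumulates at v.
   Hence the edges of the domain at v correspond bijectively to those of the
   graph, and Kirchhoff's condition transfers.  Finally f does not vanish on the
   domain, since vanishing on a segment would give a degenerate critical point. *)

Section RealAnalysis.
Variable R : realType.
Implicit Types (f g : R -> R) (k a c x : R).

Lemma transl_quotient f c x :
  (fun h : R => h^-1 *: (((fun y => f (c + y)) \o shift x) (h *: (1 : R)) - f (c + x)))
  = (fun h : R => h^-1 *: ((f \o shift (c + x)) (h *: (1 : R)) - f (c + x))).
Proof. by apply/funext => h /=; rewrite addrCA. Qed.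

Lemma derivable_transl f c x :
  derivable f (c + x) 1 -> derivable (fun y => f (c + y)) x 1.
Proof. by rewrite /derivable transl_quotient. Qed.

Lemma derive1_transl f c x : derive1 (fun y => f (c + y)) x = derive1 f (c + x).
Proof. by rewrite !derive1E /derive transl_quotient. Qed.

Lemma pos_below (a b : R) : 0 < a -> 0 < b -> exists2 y, 0 < y & y < a /\ y < b.
Proof.
move=> a0 b0; have m0 : 0 < Num.min a b by rewrite lt_min a0 b0.
have [ma mb] : Num.min a b <= a /\ Num.min a b <= b by rewrite !ge_min !lexx orbT.
by exists (Num.min a b / 2); [|split]; lra.
Qed.

Lemma derive_le0_right_max f c r : derivable f c 1 -> 0 < r ->
  (forall h, 0 < h < r -> f (c + h) <= f c) -> 'D_1 f c <= 0.
Proof.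
move=> dfc r0 cmax.
rewrite ['D_1 f c]cvg_at_rightE; last exact: dfc.
apply: limr_le.
  rewrite -(cvg_at_rightE (fun h : R => h^-1 *: ((f \o shift c) _ - f c))) //.
  apply: cvg_trans dfc; apply: cvg_app.
  move=> A [e egt0 Ae]; exists e => // x xe xgt0; apply: Ae => //.
  exact/lt0r_neq0.
near=> h; apply: mulr_ge0_le0.
  by rewrite invr_ge0; apply: ltW; near: h; exists 1 => /=.
rewrite /= scaler1 [h + c]addrC subr_le0; apply: cmax; apply/andP; split.
  by near: h; exists 1 => /=.
near: h; exists r => //= h; rewrite /= distrC subr0.
by move/(le_lt_trans (ler_norm _)).
Unshelve. all: by end_near. Qed.

Lemma derive_ge0_left_max f c r : derivable f c 1 -> 0 < r ->
  (forall h, 0 < h < r -> f (c - h) <= f c) -> 0 <= 'D_1 f c.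
Proof.
move=> dfc r0 cmax.
rewrite ['D_1 f c]cvg_at_leftE; last exact: dfc.
apply: limr_ge.
  rewrite -(cvg_at_leftE (fun h => h^-1 *: ((f \o shift c) _ - f c))) //.
  apply: cvg_trans dfc; apply: cvg_app.
  move=> A [e egt0 Ae]; exists e => // x xe xgt0; apply: Ae => //.
  exact/ltr0_neq0.
near=> h; apply: mulr_le0.
  by rewrite invr_le0; apply: ltW; near: h; exists 1 => /=.
rewrite /= scaler1 [h + c]addrC -[h]opprK subr_le0.
apply: cmax; apply/andP; split.
  by rewrite oppr_gt0; near: h; exists 1 => /=.
near: h; exists r => //= h; rewrite /= distrC subr0 => + _.
by apply: le_lt_trans; rewrite -normrN; exact: ler_norm.
Unshelve. all: by end_near. Qed.

Lemma derive_ge0_right_min f c r : derivable f c 1 -> 0 < r ->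
  (forall h, 0 < h < r -> f c <= f (c + h)) -> 0 <= 'D_1 f c.
Proof.
move=> dfc r0 cmin; rewrite -oppr_le0 -deriveN //.
by apply: derive_le0_right_max r0 _ => [|h /cmin]; [exact: derivableN|rewrite lerN2].
Qed.

Lemma derive_le0_left_min f c r : derivable f c 1 -> 0 < r ->
  (forall h, 0 < h < r -> f c <= f (c - h)) -> 'D_1 f c <= 0.
Proof.
move=> dfc r0 cmin; rewrite -oppr_ge0 -deriveN //.
by apply: derive_ge0_left_max r0 _ => [|h /cmin]; [exact: derivableN|rewrite lerN2].
Qed.

Lemma nonzero_punctured_nbhs f a : derivable f a 1 -> f a != 0 \/ 'D_1 f a != 0 ->
  exists2 d, 0 < d & forall t, 0 < `|t - a| < d -> f t != 0.
Proof.
move=> dfa; case: (eqVneq (f a) 0) => [fa0 [//|Dfa] | fa0 _].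
  (* as f a = 0, the difference quotient at t is f t / (t - a) *)
  have [d /= d0 fnz] := cvgr_neq0 _ dfa Dfa.
  exists d => // t /andP[ta td]; have := fnz (t - a).
  rewrite /ball /= sub0r normrN -normr_gt0 ta td => /(_ isT isT).
  by rewrite /= scaler1 subrK fa0 subr0; apply: contraNneq => ->; rewrite scaler0.
have cfa : {for a, continuous (f : R^o -> R^o)}.
  by apply: differentiable_continuous; exact/derivable1_diffP.
have [d /= d0 fnz] := cvgr_neq0 _ cfa fa0.
by exists d => // t /andP[_ td]; apply: fnz; rewrite /ball /= distrC.
Qed.

Definition helmholtz k g := forall x,
  derivable g x 1 /\ derivable (derive1 g) x 1 /\
  derive1 (derive1 g) x = - (k ^+ 2) * g x.

Definition energy k g x := derive1 g x ^+ 2 + k ^+ 2 * g x ^+ 2.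

Lemma helmholtz_is_derive_energy k g x :
  helmholtz k g -> is_derive x 1 (energy k g) 0.
Proof.
move=> sol; have [dg [dg' eqg'']] := sol x.
have Dg : is_derive x 1 g (derive1 g x) by rewrite derive1E; exact: derivableP.
have Dg' : is_derive x 1 (derive1 g) (- (k ^+ 2) * g x).
  by rewrite -eqg'' derive1E; exact: derivableP.
have -> : energy k g = derive1 g ^+ 2 + k ^+ 2 \*: g ^+ 2.
  by apply/funext => y; rewrite /energy /GRing.scale /= !expr2.
apply: is_derive_eq; rewrite /GRing.scale /= expr1; ring.
Qed.

Lemma helmholtz_energy_const k g x y : helmholtz k g -> energy k g x = energy k g y.
Proof.
move=> sol; have DE (z : R) : is_derive z 1 (energy k g) 0.
  exact: helmholtz_is_derive_energy.
have cE : continuous (energy k g : R^o -> R^o).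
  by move=> z; apply: differentiable_continuous; apply/derivable1_diffP; case: (DE z).
wlog xy : x y / x < y.
  move=> W; case: (ltgtP x y) => [/W //|/W -> //|-> //].
have [c _] := MVT xy (fun z _ => DE z) (continuous_subspaceT cE).
by rewrite mul0r => /eqP; rewrite subr_eq0 => /eqP.
Qed.

Lemma helmholtz_degenerate k g a : helmholtz k g ->
  derive1 g a = 0 -> derive1 (derive1 g) a = 0 ->
  forall x, derive1 g x = 0 /\ derive1 (derive1 g) x = 0.
Proof.
move=> sol g'a g''a x; have [_ [_ eqg''a]] := sol a; have [_ [_ eqg''x]] := sol x.
have kga : k ^+ 2 * g a = 0 by apply/eqP; rewrite -oppr_eq0 -mulNr -eqg''a g''a.
have : energy k g x = 0.
  by rewrite (helmholtz_energy_const x a sol) /energy g'a expr2 mulrA kga; ring.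
move/eqP; rewrite /energy -exprMn paddr_eq0 ?sqr_ge0 // !sqrf_eq0.
case/andP => /eqP g'x /eqP kgx; split => //.
by rewrite eqg''x expr2 -mulNr -mulrA kgx mulr0.
Qed.

Lemma helmholtz_crit_isolated k g a x0 : helmholtz k g ->
  ~ (derive1 g x0 = 0 /\ derive1 (derive1 g) x0 = 0) ->
  exists2 d, 0 < d & forall t, 0 < `|t - a| < d -> derive1 g t != 0.
Proof.
move=> sol nondeg; have [_ [dg' _]] := sol a.
apply: nonzero_punctured_nbhs dg' _; rewrite -derive1E.
case: (eqVneq (derive1 g a) 0) => [g'a|]; [right|by left].
by apply/eqP => g''a; apply: nondeg; exact: helmholtz_degenerate g'a g''a x0.
Qed.

Lemma psumr_sub_nsumr_eq0 (T : finType) (P Q : pred T) (F G : T -> R) :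
  (forall t, P t -> 0 <= F t) -> (forall t, Q t -> G t <= 0) ->
  \sum_(t | P t) F t - \sum_(t | Q t) G t = 0 ->
  (forall t, P t -> F t = 0) /\ (forall t, Q t -> G t = 0).
Proof.
move=> F0 G0 /eqP; rewrite subr_eq0 => /eqP eqFG.
have sF0 : 0 <= \sum_(t | P t) F t by exact: sumr_ge0.
have sG0 : \sum_(t | Q t) G t <= 0 by exact: sumr_le0.
have sG : \sum_(t | Q t) G t = 0 by apply/eqP; rewrite eq_le sG0 -eqFG sF0.
split; first by apply: psumr_eq0P => //; rewrite eqFG.
move=> t Qt; apply/eqP; rewrite -oppr_eq0; apply/eqP; move: t Qt.
by apply: psumr_eq0P => [t /G0|]; rewrite ?oppr_ge0 // sumrN sG oppr0.
Qed.

Lemma sumr_reindex_bij (T U : finType) (P : pred T) (Q : pred U) (h : T -> U)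
    (F : U -> R) :
  {in P &, injective h} -> (forall t, P t -> Q (h t)) ->
  (forall u, Q u -> exists2 t, P t & h t = u) ->
  \sum_(t | P t) F (h t) = \sum_(u | Q u) F u.
Proof.
move=> hinj PQ QP; rewrite -[LHS]/(\sum_(t in P) F (h t)) -big_imset //.
apply: eq_bigl => u; apply/imsetP/idP => [[t Pt ->]|/QP [t Pt <-]]; first exact: PQ.
by exists t.
Qed.

Lemma pos_lower_bound (T : finType) (F : T -> R) :
  exists2 m, 0 < m & forall t, 0 < F t -> m <= F t.
Proof.
exists (\big[Num.min/1]_(t | 0 < F t) F t).
  by apply: (big_ind (fun x => 0 < x)) => // x y x0 y0; rewrite lt_min x0.
by move=> t Ft; rewrite (bigD1 t) //= ge_min lexx.
Qed.

End RealAnalysis.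

Section MetricGraph.
Variables (R : realType) (G : mgraph R).
Implicit Types (e : mE G) (v : mV G) (x y : R).

Lemma canon_interior e y : 0 < y < mlen e -> canon e y = PE e y.
Proof. by case/andP => y0 yL; rewrite /canon (gt_eqF y0) (lt_eqF yL). Qed.

Lemma canon0 e : canon e 0 = PV (msrc e).
Proof. by rewrite /canon eqxx. Qed.

Lemma canon_mlen e : canon e (mlen e) = PV (mtgt e).
Proof. by rewrite /canon (gt_eqF (mlen_pos e)) eqxx. Qed.

Lemma canon_PE e1 e2 x y : canon e1 x = PE e2 y -> e1 = e2 /\ x = y.
Proof. by rewrite /canon; case: eqP => _ //; case: eqP => _ // [-> ->]. Qed.

Lemma canon_PV_src e x v : 0 <= x -> x < mlen e -> canon e x = PV v ->
  x = 0 /\ msrc e = v.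
Proof.
move=> x0 xL; rewrite /canon; case: eqP => [-> [] //|_].
by case: eqP => [xL'|//]; move: xL; rewrite xL' ltxx.
Qed.

Lemma canon_PV_tgt e x v : 0 < x -> x <= mlen e -> canon e x = PV v ->
  x = mlen e /\ mtgt e = v.
Proof.
move=> x0 xL; rewrite /canon; case: eqP => [x0'|_]; first by move: x0; rewrite x0' ltxx.
by case: eqP => [-> [] //|].
Qed.

Lemma connected_incident e0 : graph_connected G ->
  forall v, exists e, msrc e = v \/ mtgt e = v.
Proof.
pose incident v := exists e, msrc e = v \/ mtgt e = v.
have inc_rst v w : clos_refl_sym_trans _ (@adj R G) v w ->
    v = w \/ (incident v /\ incident w).
  elim => {v w} [v w [e [<- <-]]|v|v w _ IH|u v w _ IH1 _ IH2].
  - by right; split; exists e; tauto.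
  - by left.
  - by case: IH => [->|[]]; [left|right].
  - by case: IH1 IH2 => [->|[iu iv]] [<-|[iv' iw]]; [left|right|right|right].
move=> Gconn v; have [->|[]//] := inc_rst _ _ (Gconn v (msrc e0)).
by exists e0; left.
Qed.

End MetricGraph.

Section Eigenfunction.
Variables (R : realType) (G : mgraph R) (k : R) (f : gfun G).
Hypotheses (f_ode : edge_ode k f) (f_neumann : neumann_conditions f) (f_morse : morse f).
Implicit Types (e : mE G) (v : mV G) (x y z : R).

Let f_derivable : forall e x, derivable (f e) x 1.
Proof. by move=> e x; case: (f_ode e x). Qed.

Lemma f_canon_eq e1 e2 x1 x2 : canon e1 x1 = canon e2 x2 -> f e1 x1 = f e2 x2.
Proof.
rewrite /canon.
case: eqP => [->|_]; [|case: eqP => [->|_]];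
  (case: eqP => [->|_]; [|case: eqP => [->|_]]) => //.
- by case=> E; apply: ((f_neumann (msrc e1)).1 e1 e2).1.
- by case=> E; apply: ((f_neumann (msrc e1)).1 e1 e2).2.1.
- by case=> E; symmetry; apply: ((f_neumann (msrc e2)).1 e2 e1).2.1.
- by case=> E; apply: ((f_neumann (mtgt e1)).1 e1 e2).2.2.
- by case=> -> ->.
Qed.

Lemma neumann_point_edge_derive0 e z : 0 < z < mlen e ->
  neumann_point f (PE e z) -> derive1 (f e) z = 0.
Proof.
move=> /andP[z0 zL] [_ [ext _]].
have interval cmp : local_ext f cmp (PE e z) ->
    exists2 r, 0 < r & forall t, t \in `]z - r, z + r[ -> cmp (f e t) (f e z).
  case=> eps eps0 ext_eps; have zL' : 0 < mlen e - z by lra.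
  have [r1 r10 [r1e r1z]] := pos_below eps0 z0.
  have [r r0 [rr1 rzL]] := pos_below r10 zL'.
  exists r => // t; rewrite in_itv /= => /andP[t1 t2]; apply: ext_eps.
    by apply/andP; split; lra.
  by rewrite ltr_norml; apply/andP; split; lra.
have zI r : 0 < r -> z \in `]z - r, z + r[.
  by move=> r0; rewrite in_itv /=; apply/andP; split; lra.
rewrite derive1E; apply: derive_val.
case: ext => /interval [r r0 rcmp].
- by apply: derive1_at_max (zI r r0) rcmp => [|t _]; [lra|exact: f_derivable].
- by apply: derive1_at_min (zI r r0) rcmp => [|t _]; [lra|exact: f_derivable].
Qed.

(* One nondegenerate point (the midpoint, by [morse]) excludes degenerate
   critical points on the whole edge, see [helmholtz_degenerate]. *)
Lemma no_neumann_point_near_src e : exists2 d, 0 < d &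
  forall z, 0 < z < mlen e -> z < d -> ~ neumann_point f (PE e z).
Proof.
have mid : 0 < mlen e / 2 < mlen e by apply/andP; split; have := mlen_pos e; lra.
have [d d0 fnz] := helmholtz_crit_isolated 0 (f_ode e) (f_morse mid).
exists d => // z zI zd /(neumann_point_edge_derive0 zI) /eqP; apply/negP/fnz.
by case/andP: zI => z0 _; rewrite subr0 gtr0_norm // z0.
Qed.

Lemma no_neumann_point_near_tgt e : exists2 d, 0 < d &
  forall z, 0 < z < mlen e -> mlen e - z < d -> ~ neumann_point f (PE e z).
Proof.
have mid : 0 < mlen e / 2 < mlen e by apply/andP; split; have := mlen_pos e; lra.
have [d d0 fnz] := helmholtz_crit_isolated (mlen e) (f_ode e) (f_morse mid).
exists d => // z zI zd /(neumann_point_edge_derive0 zI) /eqP; apply/negP/fnz.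
by case/andP: zI => _ zL; rewrite distrC gtr0_norm ?subr_gt0 // zL.
Qed.

Lemma neumann_point_vertex_derive0 v : neumann_point f (PV v) -> forall e,
  (msrc e = v -> derive1 (f e) 0 = 0) /\ (mtgt e = v -> derive1 (f e) (mlen e) = 0).
Proof.
move=> [_ [ext _]].
have kirchhoff := (f_neumann v).2.
suff [D0 DL] : (forall e, msrc e == v -> derive1 (f e) 0 = 0) /\
    (forall e, mtgt e == v -> derive1 (f e) (mlen e) = 0).
  by move=> e; split => /eqP; [exact: D0|exact: DL].
case: ext => [[eps eps0 ext_eps]|[eps eps0 ext_eps]].
- have [] := @psumr_sub_nsumr_eq0 _ _ (fun e => msrc e == v) (fun e => mtgt e == v)
      (fun e => - derive1 (f e) 0) (fun e => - derive1 (f e) (mlen e)).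
  + move=> e /eqP ev; have [r r0 [re rL]] := pos_below eps0 (mlen_pos e).
    rewrite oppr_ge0 derive1E; apply: derive_le0_right_max (@f_derivable e 0) r0 _.
    move=> h /andP[h0 hr]; rewrite add0r.
    by apply: (ext_eps e).1 => //; [apply/andP; split|]; lra.
  + move=> e /eqP ev; have [r r0 [re rL]] := pos_below eps0 (mlen_pos e).
    rewrite oppr_le0 derive1E; apply: derive_ge0_left_max (@f_derivable e _) r0 _.
    by move=> h /andP[h0 hr]; apply: (ext_eps e).2 => //; [apply/andP; split|]; lra.
  + by rewrite !sumrN -opprD kirchhoff oppr0.
  + move=> D0 DL; split=> e ev; apply/eqP; rewrite -oppr_eq0; apply/eqP.
      exact: D0.
    exact: DL.
- apply: psumr_sub_nsumr_eq0 kirchhoff.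
  + move=> e /eqP ev; have [r r0 [re rL]] := pos_below eps0 (mlen_pos e).
    rewrite derive1E; apply: derive_ge0_right_min (@f_derivable e 0) r0 _.
    move=> h /andP[h0 hr]; rewrite add0r.
    by apply: (ext_eps e).1 => //; [apply/andP; split|]; lra.
  + move=> e /eqP ev; have [r r0 [re rL]] := pos_below eps0 (mlen_pos e).
    rewrite derive1E; apply: derive_le0_left_min (@f_derivable e _) r0 _.
    by move=> h /andP[h0 hr]; apply: (ext_eps e).2 => //; [apply/andP; split|]; lra.
Qed.

Lemma neumann_point_canon_derive0 e x : 0 <= x <= mlen e ->
  neumann_point f (canon e x) -> derive1 (f e) x = 0.
Proof.
move=> /andP[x0 xL]; rewrite /canon.
case: eqP => [-> /neumann_point_vertex_derive0 /(_ e) [+ _]|x_neq0]; first exact.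
case: eqP => [-> /neumann_point_vertex_derive0 /(_ e) [_ +]|x_neqL]; first exact.
apply: neumann_point_edge_derive0.
by rewrite !lt_def x0 xL !andbT; apply/andP; split; apply/eqP => // /esym.
Qed.

End Eigenfunction.

Section NeumannDomain.
Variables (R : realType) (G : mgraph R) (k : R) (f : gfun G).
Hypotheses (f_ode : edge_ode k f) (f_neumann : neumann_conditions f) (f_morse : morse f).
Variables (O : mgraph R) (iE : mE O -> mE G) (off : mE O -> R) (iV : mV O -> gpoint G).
Notation iP := (iota_pt iE off iV).
Notation NP := (neumann_point f).
Hypotheses
  (off_range : forall e', 0 <= off e' /\ off e' + mlen e' <= mlen (iE e'))
  (iV_ends : forall e', iV (msrc e') = canon (iE e') (off e') /\
                        iV (mtgt e') = canon (iE e') (off e' + mlen e'))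
  (iV_vertex : forall w,
     (exists v, iV w = PV v /\ ~ NP (PV v)) \/ (NP (iV w) /\ deg w = 1%N))
  (iP_inj : forall p q, valid_point p -> valid_point q -> ~ NP (iP p) -> ~ NP (iP q) ->
     iP p = iP q -> p = q)
  (iP_component : exists2 c, valid_point c /\ ~ NP c &
     forall q, (valid_point q /\ ~ NP q /\ nconn f c q) <->
               (exists p, [/\ valid_point p, ~ NP (iP p) & iP p = q])).

Lemma iP_vertex_nconn_edge w v e y : iV w = PV v -> ~ NP (PV v) -> 0 < y < mlen e ->
  ~ NP (PE e y) -> nconn f (PV v) (PE e y) ->
  exists e', exists2 x, 0 < x < mlen e' & iE e' = e /\ off e' + x = y.
Proof.
move=> wv vNP ey eyNP vey; have [c _ comp] := iP_component.
have [_ [_ cv]] : valid_point (PV v) /\ ~ NP (PV v) /\ nconn f c (PV v).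
  by apply/comp; exists (PV w); rewrite /= wv.
have cey := rst_trans _ _ _ _ _ cv vey.
have [[w' | e' x] [xI pNP]] := (comp (PE e y)).1 (conj ey (conj eyNP cey)).
  by case: (iV_vertex w') => [[v' [/= -> _]] | [w'NP _]].
by case/canon_PE => <- <-; exists e', x.
Qed.

Lemma src_edge_at w v e' : msrc e' = w -> iV w = PV v -> off e' = 0 /\ msrc (iE e') = v.
Proof.
move=> <-; rewrite (iV_ends e').1; have [off0 offL] := off_range e'.
by apply: canon_PV_src => //; have := mlen_pos e'; lra.
Qed.

Lemma tgt_edge_at w v e' : mtgt e' = w -> iV w = PV v ->
  off e' + mlen e' = mlen (iE e') /\ mtgt (iE e') = v.
Proof.
move=> <-; rewrite (iV_ends e').2; have [off0 offL] := off_range e'.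
by apply: canon_PV_tgt => //; have := mlen_pos e'; lra.
Qed.

Lemma src_edge_onto w v e : iV w = PV v -> ~ NP (PV v) -> msrc e = v ->
  exists2 e', msrc e' = w & iE e' = e.
Proof.
move=> wv vNP ev.
have [m m0 offm] := pos_lower_bound off.
have [d d0 dNP] := no_neumann_point_near_src f_ode f_morse e.
have [y1 y10 [y1d y1L]] := pos_below d0 (mlen_pos e).
have [y y0 [yy1 ym]] := pos_below y10 m0.
have ey : 0 < y < mlen e by apply/andP; split; lra.
have vey : nconn f (PV v) (PE e y).
  apply: rst_step; rewrite -ev; apply: nstep_src => //; first by rewrite ev.
  by move=> z /andP[z0 zy]; apply: dNP; [apply/andP; split|]; lra.
have [e' [x /andP[x0 _] [ee' offx]]] :=
  iP_vertex_nconn_edge wv vNP ey (dNP _ ey (lt_trans yy1 y1d)) vey.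
have off0 : off e' = 0.
  have [off_ge0 _] := off_range e'.
  by case: (ltrP 0 (off e')) => [/offm|]; lra.
exists e' => //.
have e'v : iV (msrc e') = PV v by rewrite (iV_ends e').1 off0 ee' canon0 ev.
by have [] : PV (msrc e') = PV w by apply: iP_inj; rewrite /= ?e'v ?wv.
Qed.

Lemma tgt_edge_onto w v e : iV w = PV v -> ~ NP (PV v) -> mtgt e = v ->
  exists2 e', mtgt e' = w & iE e' = e.
Proof.
move=> wv vNP ev.
have [m m0 endm] := pos_lower_bound (fun e' => mlen (iE e') - (off e' + mlen e')).
have [d d0 dNP] := no_neumann_point_near_tgt f_ode f_morse e.
have [y1 y10 [y1d y1L]] := pos_below d0 (mlen_pos e).
have [t t0 [ty1 tm]] := pos_below y10 m0.
have ey : 0 < mlen e - t < mlen e by apply/andP; split; lra.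
have vey : nconn f (PV v) (PE e (mlen e - t)).
  apply: rst_step; rewrite -ev; apply: nstep_tgt => //; first by rewrite ev.
  by move=> z /andP[zy zL]; apply: dNP; [apply/andP; split|]; lra.
have eyNP : ~ NP (PE e (mlen e - t)) by apply: dNP => //; lra.
have [e' [x /andP[_ xL] [ee' offx]]] := iP_vertex_nconn_edge wv vNP ey eyNP vey.
have end0 : off e' + mlen e' = mlen (iE e').
  have [_ offL] := off_range e'; have := endm e'; rewrite ee' in offL * => endm'.
  by case: (ltrP 0 (mlen e - (off e' + mlen e'))) => [/endm'|]; lra.
exists e' => //.
have e'v : iV (mtgt e') = PV v by rewrite (iV_ends e').2 end0 ee' canon_mlen ev.
by have [] : PV (mtgt e') = PV w by apply: iP_inj; rewrite /= ?e'v ?wv.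
Qed.

Lemma src_edge_inj w v e1 e2 : iV w = PV v -> msrc e1 = w -> msrc e2 = w ->
  iE e1 = iE e2 -> e1 = e2.
Proof.
move=> wv e1w e2w E12.
have [off1 _] := src_edge_at e1w wv; have [off2 _] := src_edge_at e2w wv.
have [d d0 dNP] := no_neumann_point_near_src f_ode f_morse (iE e1).
have [y1 y10 [y1d y1L]] := pos_below d0 (mlen_pos e1).
have [y y0 [yy1 yL]] := pos_below y10 (mlen_pos e2).
have ey : 0 < y < mlen (iE e1).
  by have [_ offL] := off_range e1; rewrite off1 in offL; apply/andP; split; lra.
have p1 : iP (PE e1 y) = PE (iE e1) y by rewrite /= off1 add0r canon_interior.
have p2 : iP (PE e2 y) = PE (iE e1) y by rewrite /= off2 add0r -E12 canon_interior.
have yNP := dNP _ ey (lt_trans yy1 y1d).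
have [] : PE e1 y = PE e2 y.
  by apply: iP_inj; rewrite ?p1 ?p2 //=; apply/andP; split; lra.
by [].
Qed.

Lemma tgt_edge_inj w v e1 e2 : iV w = PV v -> mtgt e1 = w -> mtgt e2 = w ->
  iE e1 = iE e2 -> e1 = e2.
Proof.
move=> wv e1w e2w E12.
have [end1 _] := tgt_edge_at e1w wv; have [end2 _] := tgt_edge_at e2w wv.
have [d d0 dNP] := no_neumann_point_near_tgt f_ode f_morse (iE e1).
have [y1 y10 [y1d y1L]] := pos_below d0 (mlen_pos e1).
have [t t0 [ty1 tL]] := pos_below y10 (mlen_pos e2).
set y := mlen (iE e1) - t.
have ey : 0 < y < mlen (iE e1).
  by have [off1 _] := off_range e1; rewrite /y; apply/andP; split; lra.
have p1 : iP (PE e1 (mlen e1 - t)) = PE (iE e1) y.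
  by rewrite /= addrA end1 canon_interior.
have p2 : iP (PE e2 (mlen e2 - t)) = PE (iE e1) y.
  by rewrite /= addrA end2 -E12 canon_interior.
have yNP : ~ NP (PE (iE e1) y) by apply: dNP; rewrite // /y; lra.
have [] : PE e1 (mlen e1 - t) = PE e2 (mlen e2 - t).
  by apply: iP_inj; rewrite ?p1 ?p2 //=; apply/andP; split; lra.
by [].
Qed.

Definition f_restr : gfun O := fun e' x => f (iE e') (off e' + x).

Lemma derive1_f_restr e' x : derive1 (f_restr e') x = derive1 (f (iE e')) (off e' + x).
Proof. exact: derive1_transl. Qed.

Lemma f_restr_ode : edge_ode k f_restr.
Proof.
move=> e' x; have [df [df' eqf'']] := f_ode (iE e') (off e' + x).
split; first exact: derivable_transl.
have -> : derive1 (f_restr e') = fun y => derive1 (f (iE e')) (off e' + y).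
  by apply/funext => y; exact: derive1_f_restr.
by split; [exact: derivable_transl|rewrite derive1_transl].
Qed.

Lemma f_restr_neumann : neumann_conditions f_restr.
Proof.
move=> w; split.
  move=> e1 e2; have [s1 t1] := iV_ends e1; have [s2 t2] := iV_ends e2.
  by split; [|split] => e1w e2w; rewrite /f_restr ?addr0; apply: (f_canon_eq f_neumann);
    rewrite -?s1 -?s2 -?t1 -?t2 e1w e2w.
under eq_bigr do rewrite derive1_f_restr addr0.
under [X in _ - X]eq_bigr do rewrite derive1_f_restr.
case: (iV_vertex w) => [[v [wv vNP]] | [wNP _]]; last first.
  rewrite !big1 ?subrr // => e' /eqP e'w; have [off0 offL] := off_range e';
    have L0 := mlen_pos e'; apply: (neumann_point_canon_derive0 f_ode f_neumann).
  - by apply/andP; split; lra.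
  - by rewrite -(iV_ends e').2 e'w.
  - by apply/andP; split; lra.
  - by rewrite -(iV_ends e').1 e'w.
have src_sum : \sum_(e' | msrc e' == w) derive1 (f (iE e')) (off e') =
    \sum_(e | msrc e == v) derive1 (f e) 0.
  rewrite -(sumr_reindex_bij (P := fun e' => msrc e' == w) (h := iE)).
  - by apply: eq_bigr => e' /eqP e'w; rewrite (src_edge_at e'w wv).1.
  - by move=> e1 e2 /eqP e1w /eqP e2w; exact: src_edge_inj wv e1w e2w.
  - by move=> e' /eqP e'w; rewrite (src_edge_at e'w wv).2.
  - by move=> e /eqP /(src_edge_onto wv vNP) [e' /eqP e'w <-]; exists e'.
have tgt_sum : \sum_(e' | mtgt e' == w) derive1 (f (iE e')) (off e' + mlen e') =
    \sum_(e | mtgt e == v) derive1 (f e) (mlen e).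
  rewrite -(sumr_reindex_bij (P := fun e' => mtgt e' == w) (h := iE)).
  - by apply: eq_bigr => e' /eqP e'w; rewrite (tgt_edge_at e'w wv).1.
  - by move=> e1 e2 /eqP e1w /eqP e2w; exact: tgt_edge_inj wv e1w e2w.
  - by move=> e' /eqP e'w; rewrite (tgt_edge_at e'w wv).2.
  - by move=> e /eqP /(tgt_edge_onto wv vNP) [e' /eqP e'w <-]; exists e'.
by rewrite src_sum tgt_sum; exact: (f_neumann v).2.
Qed.

Lemma f_restr_edge_nonzero e' : exists x, 0 <= x <= mlen e' /\ f_restr e' x != 0.
Proof.
case: (pselect (exists x, 0 <= x <= mlen e' /\ f_restr e' x != 0)) => // allzero.
have zero x : 0 <= x <= mlen e' -> f (iE e') (off e' + x) = 0.
  by move=> xI; apply/eqP; apply: contraT => fx; case: allzero; exists x.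
have [off0 offL] := off_range e'; have L0 := mlen_pos e'.
pose mid := off e' + mlen e' / 2.
have fmid : f (iE e') mid = 0 by apply: zero; apply/andP; split; lra.
have f'mid : derive1 (f (iE e')) mid = 0.
  rewrite derive1E; apply: derive_val.
  apply: (@derive1_at_max _ _ (off e') (off e' + mlen e')).
  - by lra.
  - by move=> t _; case: (f_ode (iE e') t).
  - by rewrite in_itv /= /mid; apply/andP; split; lra.
  - move=> t; rewrite in_itv /= => /andP[t1 t2].
    rewrite fmid -(subrKC (off e') t) zero //.
    by apply/andP; split; lra.
exfalso; apply: (f_morse (e := iE e') (x := mid)).
  by rewrite /mid; apply/andP; split; lra.
by split => //; have [_ [_ ->]] := f_ode (iE e') mid; rewrite fmid mulr0.
Qed.

Lemma f_restr_nonzero : graph_connected G -> nonzero_fun f -> nonzero_fun f_restr.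
Proof.
move=> Gconn [e0 _].
suff [e'] : inhabited (mE O).
  by have [x [xI fx]] := f_restr_edge_nonzero e'; exists e', x.
have [c [cv cNP] comp] := iP_component.
have [[w | e' x] [_ pNP ?]] :=
  (comp c).1 (conj cv (conj cNP (rst_refl _ _ c))); last by [].
case: (iV_vertex w) => [[v [wv vNP]] | [wNP _]]; last by [].
have [e [ev|ev]] := connected_incident e0 Gconn v.
  by have [e' _ _] := src_edge_onto wv vNP ev.
by have [e' _ _] := tgt_edge_onto wv vNP ev.
Qed.

End NeumannDomain.

Theorem lemma8p1 (R : realType) (G : mgraph R) (k : R) (f : gfun G)
    (O : mgraph R) (iE : mE O -> mE G) (off : mE O -> R) (iV : mV O -> gpoint G) :
  graph_connected G -> standard G -> nontrivial G ->
  0 <= k -> eigenfunction k f -> morse f ->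
  neumann_domain f iE off iV ->
  eigenfunction k (fun (e' : mE O) (x : R) => f (iE e') (off e' + x)).
Proof.
move=> Gconn _ _ _ [f_ode f_neumann f_nonzero] f_morse
  [off_range iV_ends iV_vertex iP_inj iP_component].
by split; [exact: f_restr_ode | apply: f_restr_neumann | apply: f_restr_nonzero].
Qed.
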